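(* Let $\delta<\mathfrak t$ and let $\langle\bar\eta^\alpha:\alpha<\delta\rangle$ be a $\le^*$-increasing sequence of members of $\mathbf S$ (i.e. $\bar\eta^\alpha\le^*\bar\eta^\beta$ for $\alpha<\beta<\delta$). Then there is $\bar\eta\in\mathbf S$ with $\bar\eta^\alpha\le^*\bar\eta$ for all $\alpha<\delta$.
   Context: $\mathfrak t$ is the least length $\kappa$ of a sequence $\langle X_\alpha:\alpha<\kappa\rangle$ of infinite subsets of $\omega$ with $X_\beta\setminus X_\alpha$ finite for $\alpha<\beta$ and no infinite $X$ with $X\setminus X_\alpha$ finite for all $\alpha$. $\mathbf S$ is the family of all sequences $\bar\eta=\langle\eta_n:n\in B\rangle$ with $B\subseteq\omega$ infinite such that for each $n\in B$, $\eta_n$ is a function from the interval $[n,k)$ to $\{0,1\}$ for some $k\in(n,\omega)$; $\mathrm{dom}(\bar\eta)=B$. $\eta\trianglelefteq\nu$ means $\nu$ extends $\eta$. For $\bar\eta,\bar\nu\in\mathbf S$, $\bar\eta\le^*\bar\nu$ means that for all sufficiently large $n$, if $n\in\mathrm{dom}(\bar\nu)$ then $n\in\mathrm{dom}(\bar\eta)$ and $\eta_n\trianglelefteq\nu_n$. *)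

From Stdlib Require Import Arith.

Definition infinite_set (X : nat -> Prop) : Prop :=
  forall m, exists n, m <= n /\ X n.

Definition finite_set (X : nat -> Prop) : Prop :=
  exists m, forall n, X n -> n < m.

Definition almost_sub (X Y : nat -> Prop) : Prop :=
  finite_set (fun n => X n /\ ~ Y n).

Definition well_order {I : Type} (lt : I -> I -> Prop) : Prop :=
  (forall a, ~ lt a a) /\
  (forall a b c, lt a b -> lt b c -> lt a c) /\
  (forall a b, lt a b \/ a = b \/ lt b a) /\
  well_founded lt.

Definition is_tower {J : Type} (ltJ : J -> J -> Prop) (X : J -> nat -> Prop) : Prop :=
  (forall a, infinite_set (X a)) /\
  (forall a b, ltJ a b -> almost_sub (X b) (X a)) /\
  ~ (exists Y : nat -> Prop, infinite_set Y /\ forall a, almost_sub Y (X a)).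

(* The order type of (I, ltI) is < t : no ordinal gamma <= that order type
   (i.e. no well-order order-embeddable into (I, ltI)) is the length of a tower. *)
Definition below_t {I : Type} (ltI : I -> I -> Prop) : Prop :=
  forall (J : Type) (ltJ : J -> J -> Prop) (f : J -> I),
    well_order ltJ ->
    (forall a b, ltJ a b -> ltI (f a) (f b)) ->
    forall X : J -> nat -> Prop, ~ is_tower ltJ X.

(* An element eta = <eta_n : n in B>: sdom = B, for n in B, eta_n is the function
   i |-> sval n i on the interval [n, stop n) (values outside are irrelevant). *)
Record Sseq := mkSseq {
  sdom : nat -> Prop;
  stop : nat -> nat;
  sval : nat -> nat -> bool
}.

Definition in_S (e : Sseq) : Prop :=
  infinite_set (sdom e) /\ forall n, sdom e n -> n < stop e n.

Definition seg_ext (e v : Sseq) (n : nat) : Prop :=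
  stop e n <= stop v n /\
  forall i, n <= i -> i < stop e n -> sval e n i = sval v n i.

Definition le_star (e v : Sseq) : Prop :=
  exists N, forall n, N <= n -> sdom v n -> sdom e n /\ seg_ext e v n.

From Stdlib Require Import Arith Lia Classical ClassicalEpsilon FunctionalExtensionality
  ProofIrrelevance Wellfounded Cantor.

(* The domains of the [eta a] form a
   ⊆*-chain of length < t, so they have an infinite pseudo-intersection [B].
   By transfinite recursion one builds a ⊆*-chain of infinite [X a ⊆ B], each
   thinned so that consecutive points [x < y] of [X a] satisfy
   [stop (eta a) x < y]; if [g n] is a point above [n] of a pseudo-intersection
   [Z] of this chain, then [g] bounds [stop (eta a)] at almost all points of [Z],
   all of which lie in [sdom (eta a)]. Finally, a pair of a point [n] and a
   0-1 string of length [g n] is coded by a natural number; the sets of codes of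
   the restrictions of the [eta a] form a ⊆*-chain, since there are only
   finitely many codes for each [n], and any pseudo-intersection of it chooses
   one string at infinitely many [n] that extends [eta a] at almost all of them. *)

Lemma almost_sub_intro (X Y : nat -> Prop) (m : nat) :
  (forall n, m <= n -> X n -> Y n) -> almost_sub X Y.
Proof.
  intros HXY. exists m. intros n [HX HY].
  destruct (Nat.lt_ge_cases n m) as [|Hmn]; [assumption|].
  exfalso. exact (HY (HXY n Hmn HX)).
Qed.

Lemma almost_sub_elim (X Y : nat -> Prop) :
  almost_sub X Y -> exists m, forall n, m <= n -> X n -> Y n.
Proof.
  intros [m Hm]. exists m. intros n Hmn HX.
  apply NNPP. intros HY. specialize (Hm n (conj HX HY)). lia.
Qed.

Lemma almost_sub_of_sub (X Y : nat -> Prop) :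
  (forall n, X n -> Y n) -> almost_sub X Y.
Proof. intros HXY. apply (almost_sub_intro _ _ 0). auto. Qed.

Lemma almost_sub_trans (X Y Z : nat -> Prop) :
  almost_sub X Y -> almost_sub Y Z -> almost_sub X Z.
Proof.
  intros [m1 H1]%almost_sub_elim [m2 H2]%almost_sub_elim.
  apply (almost_sub_intro _ _ (m1 + m2)). intros n Hn HX.
  apply H2; [lia|]. apply H1; [lia|assumption].
Qed.

Lemma almost_sub_and (X Y Z : nat -> Prop) :
  almost_sub X Y -> almost_sub X Z -> almost_sub X (fun n => Y n /\ Z n).
Proof.
  intros [m1 H1]%almost_sub_elim [m2 H2]%almost_sub_elim.
  apply (almost_sub_intro _ _ (m1 + m2)). intros n Hn HX.
  split; [apply H1 | apply H2]; (lia || assumption).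
Qed.

Lemma almost_sub_infinite (X Y : nat -> Prop) :
  infinite_set X -> almost_sub X Y -> infinite_set (fun n => X n /\ Y n).
Proof.
  intros HX [m HXY]%almost_sub_elim k.
  destruct (HX (k + m)) as [n [Hn Xn]].
  exists n. split; [lia|]. split; [assumption|]. apply HXY; [lia|assumption].
Qed.

Lemma infinite_set_mono (X Y : nat -> Prop) :
  (forall n, X n -> Y n) -> infinite_set X -> infinite_set Y.
Proof. intros HXY HX m. destruct (HX m) as [n [Hmn Xn]]. eauto. Qed.

Definition sparse (f : nat -> nat) (Y : nat -> Prop) : Prop :=
  forall x y, Y x -> Y y -> x < y -> f x < y.

Lemma infinite_sparse_subset (P : nat -> Prop) (f : nat -> nat) :
  infinite_set P ->
  exists Q, infinite_set Q /\ (forall n, Q n -> P n) /\ sparse f Q.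
Proof.
  intros HP.
  destruct (choice (fun m n => m <= n /\ P n) HP) as [above Habove].
  set (next x := above (S (Nat.max x (f x)))).
  set (s k := Nat.iter k next (above 0)).
  assert (Hstep : forall k, s k < s (S k) /\ f (s k) < s (S k)).
  { intros k. change (s (S k)) with (next (s k)). unfold next.
    destruct (Habove (S (Nat.max (s k) (f (s k))))). lia. }
  assert (Hmono : forall i j, i < j -> s i < s j /\ f (s i) < s j).
  { intros i j Hij. induction Hij as [|j Hij [IH1 IH2]]; [apply Hstep|].
    specialize (Hstep j). lia. }
  assert (Hgrow : forall k, k <= s k).
  { induction k as [|k IH]; [lia|]. specialize (Hstep k). lia. }
  exists (fun n => exists k, s k = n). split; [|split].
  - intros m. exists (s m). split; [apply Hgrow | eauto].
  - intros n [[|k] <-]; apply Habove.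
  - intros x y [i <-] [j <-] Hxy.
    destruct (Nat.lt_trichotomy i j) as [Hij|[->|Hji]]; [apply Hmono, Hij|lia|].
    pose proof (proj1 (Hmono j i Hji)). lia.
Qed.

Lemma sparse_almost_sub_bound (f g : nat -> nat) (Y Z : nat -> Prop) :
  sparse f Y -> almost_sub Z Y -> (forall n, n < g n /\ Z (g n)) ->
  almost_sub Z (fun n => f n < g n).
Proof.
  intros HY [M HM]%almost_sub_elim Hg. apply (almost_sub_intro _ _ M).
  intros n Hn Zn. destruct (Hg n) as [Hlt Zg].
  apply HY; [apply HM | apply HM; [lia|] |]; assumption.
Qed.

Lemma well_founded_choice_recursion {I T : Type} (lt : I -> I -> Prop) (t0 : T)
    (Spec : forall a, (forall b, lt b a -> T) -> T -> Prop) :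
  well_founded lt ->
  (forall a (X : I -> T),
      (forall b, lt b a -> Spec b (fun c _ => X c) (X b)) ->
      exists x, Spec a (fun b _ => X b) x) ->
  exists X : I -> T, forall a, Spec a (fun b _ => X b) (X a).
Proof.
  intros Hwf Hstep.
  set (F a h := epsilon (inhabits t0) (Spec a h)).
  set (X := Fix Hwf (fun _ => T) F).
  assert (HX : forall a, X a = F a (fun b _ => X b)).
  { intros a. apply (Fix_eq Hwf (fun _ => T) F). intros x h1 h2 Hh.
    f_equal. apply functional_extensionality_dep. intros y.
    apply functional_extensionality. apply Hh. }
  exists X. intros a. induction a as [a IH] using (well_founded_ind Hwf).
  rewrite HX. apply epsilon_spec, Hstep, IH.
Qed.

Lemma well_order_sig {I : Type} (lt : I -> I -> Prop) (P : I -> Prop) :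
  well_order lt ->
  well_order (fun x y : {b : I | P b} => lt (proj1_sig x) (proj1_sig y)).
Proof.
  intros (Hirr & Htrans & Htot & Hwf). split; [|split; [|split]].
  - intros [x Px]. apply Hirr.
  - intros [x Px] [y Py] [z Pz]. apply Htrans.
  - intros [x Px] [y Py]. simpl.
    destruct (Htot x y) as [Hxy|[<-|Hyx]]; auto.
    right; left. f_equal. apply proof_irrelevance.
  - apply (wf_inverse_image _ _ lt (@proj1_sig I P) Hwf).
Qed.

Lemma below_t_pseudo_intersection {I J : Type} (ltI : I -> I -> Prop)
    (ltJ : J -> J -> Prop) (f : J -> I) (X : J -> nat -> Prop) :
  below_t ltI -> well_order ltJ ->
  (forall a b, ltJ a b -> ltI (f a) (f b)) ->
  (forall a, infinite_set (X a)) ->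
  (forall a b, ltJ a b -> almost_sub (X b) (X a)) ->
  exists Y, infinite_set Y /\ forall a, almost_sub Y (X a).
Proof.
  intros Hbt Hwo Hf HXi HXd. apply NNPP. intros Hno.
  apply (Hbt J ltJ f Hwo Hf X). repeat split; assumption.
Qed.

Section BelowT.

Variables (I : Type) (lt : I -> I -> Prop).
Hypotheses (Hwo : well_order lt) (Hbt : below_t lt).

Lemma pseudo_intersection_of_chain (X : I -> nat -> Prop) :
  (forall a, infinite_set (X a)) ->
  (forall a b, lt a b -> almost_sub (X b) (X a)) ->
  exists Y, infinite_set Y /\ forall a, almost_sub Y (X a).
Proof. apply (below_t_pseudo_intersection lt lt id); auto. Qed.

Lemma pseudo_intersection_below (a : I) (B : nat -> Prop) (X : I -> nat -> Prop) :
  infinite_set B ->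
  (forall b, lt b a -> infinite_set (X b) /\ forall n, X b n -> B n) ->
  (forall b c, lt b a -> lt c a -> lt b c -> almost_sub (X c) (X b)) ->
  exists P, infinite_set P /\ (forall n, P n -> B n) /\
    forall b, lt b a -> almost_sub P (X b).
Proof.
  intros HB HX HXd.
  destruct (classic (exists b, lt b a)) as [[b0 Hb0]|Hmin].
  2: { exists B. split; [assumption|split; [auto|]].
       intros b Hb. exfalso. eauto. }
  destruct (below_t_pseudo_intersection lt _ (@proj1_sig I (fun b => lt b a))
              (fun b => X (proj1_sig b)) Hbt (well_order_sig lt _ Hwo))
    as [Y [HYi HYs]].
  - auto.
  - intros [b Hb]. apply (HX b Hb).
  - intros [b Hb] [c Hc]. apply HXd; assumption.
  - exists (fun n => Y n /\ B n). split; [|split].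
    + apply almost_sub_infinite; [assumption|].
      apply (almost_sub_trans _ _ _ (HYs (exist _ b0 Hb0))).
      apply almost_sub_of_sub, (HX b0 Hb0).
    + intros n [_ Hn]. exact Hn.
    + intros b Hb. apply (almost_sub_trans _ Y); [|exact (HYs (exist _ b Hb))].
      apply almost_sub_of_sub. intros n [Hn _]. exact Hn.
Qed.

Lemma sparse_chain_exists (B : nat -> Prop) (h : I -> nat -> nat) :
  infinite_set B ->
  exists X : I -> nat -> Prop,
    (forall a, infinite_set (X a)) /\ (forall a n, X a n -> B n) /\
    (forall a, sparse (h a) (X a)) /\
    (forall a b, lt a b -> almost_sub (X b) (X a)).
Proof.
  intros HB.
  destruct (well_founded_choice_recursion lt B
              (fun a prev Y => infinite_set Y /\ (forall n, Y n -> B n) /\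
                 (forall b (p : lt b a), almost_sub Y (prev b p)) /\
                 sparse (h a) Y))
    as [X HX].
  - apply Hwo.
  - intros a X IH.
    destruct (pseudo_intersection_below a B X HB) as [P [HPi [HPB HPs]]].
    + intros b Hb. destruct (IH b Hb) as (HXi & HXB & _). auto.
    + intros b c _ Hc Hbc. apply (IH c Hc), Hbc.
    + destruct (infinite_sparse_subset P (h a) HPi) as [Q [HQi [HQP HQs]]].
      exists Q. split; [assumption|split; [auto|split; [|assumption]]].
      intros b Hb. apply (almost_sub_trans _ P); [apply almost_sub_of_sub|]; auto.
  - exists X. split; [|split; [|split]]; intros a; try apply HX.
    intros b Hab. apply (HX b), Hab.
Qed.

End BelowT.

Lemma le_star_almost_sub_sdom (e v : Sseq) :
  le_star e v -> almost_sub (sdom v) (sdom e).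
Proof.
  intros [N HN]. apply (almost_sub_intro _ _ N). intros n Hn Hv. apply HN; assumption.
Qed.

Lemma bits_exist (k : nat) (v : nat -> bool) :
  exists c, c < 2 ^ k /\ forall i, i < k -> Nat.testbit c i = v i.
Proof.
  revert v. induction k as [|k IH]; intros v.
  - exists 0. split; [simpl; lia | intros; lia].
  - destruct (IH (fun i => v (S i))) as [c [Hc Hbits]].
    exists (2 * c + Nat.b2n (v 0)). split.
    + rewrite Nat.pow_succ_r'. destruct (v 0); simpl Nat.b2n; lia.
    + intros [|i] Hi.
      * apply Nat.testbit_0_r.
      * rewrite Nat.testbit_succ_r. apply Hbits. lia.
Qed.

Lemma to_nat_bounded (K : nat -> nat) (N : nat) :
  exists M, forall n c, n < N -> c < K n -> to_nat (n, c) < M.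
Proof.
  induction N as [|N [M HM]]; [exists 0; lia|].
  assert (Hrow : exists M', forall c, c < K N -> to_nat (N, c) < M').
  { induction (K N) as [|k [M' HM']]; [exists 0; lia|].
    exists (Nat.max M' (S (to_nat (N, k)))). intros c Hc.
    destruct (Nat.eq_dec c k) as [->|Hne]; [lia|].
    specialize (HM' c ltac:(lia)). lia. }
  destruct Hrow as [M' HM'].
  exists (Nat.max M M'). intros n c Hn Hc.
  destruct (Nat.eq_dec n N) as [->|Hne].
  - specialize (HM' c Hc). lia.
  - specialize (HM n c ltac:(lia) Hc). lia.
Qed.

Lemma of_nat_fst_large (K : nat -> nat) (N : nat) :
  exists M, forall n c k, of_nat k = (n, c) -> M <= k -> c < K n -> N <= n.
Proof.
  destruct (to_nat_bounded K N) as [M HM]. exists M. intros n c k Hk HMk Hc.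
  destruct (Nat.lt_ge_cases n N) as [HnN|]; [|assumption].
  specialize (HM n c HnN Hc). rewrite <- Hk, cancel_to_of in HM. lia.
Qed.

(* [k] codes the pair [(n, c)] = [of_nat k], and [c] is read through its binary
   digits as a function [[0, g n) -> bool] extending [e_n]. Bounding [c] by
   [2 ^ g n] leaves finitely many codes for each [n]. *)
Definition codes_segment (e : Sseq) (g : nat -> nat) (k : nat) : Prop :=
  let (n, c) := of_nat k in
  sdom e n /\ stop e n <= g n /\ c < 2 ^ g n /\
  forall i, n <= i -> i < stop e n -> sval e n i = Nat.testbit c i.

Lemma codes_segment_infinite (e : Sseq) (g : nat -> nat) :
  infinite_set (fun n => sdom e n /\ stop e n <= g n) ->
  infinite_set (codes_segment e g).
Proof.
  intros He m. destruct (He m) as [n [Hmn [Hdom Hstop]]].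
  destruct (bits_exist (g n) (sval e n)) as [c [Hc Hbits]].
  exists (to_nat (n, c)). split.
  - pose proof (to_nat_non_decreasing n c). lia.
  - unfold codes_segment. rewrite cancel_of_to.
    split; [assumption|split; [assumption|split; [assumption|]]].
    intros i _ Hi. symmetry. apply Hbits. lia.
Qed.

Lemma codes_segment_le_star (e v : Sseq) (g : nat -> nat) :
  le_star e v -> almost_sub (codes_segment v g) (codes_segment e g).
Proof.
  intros [N HN]. destruct (of_nat_fst_large (fun n => 2 ^ g n) N) as [M HM].
  apply (almost_sub_intro _ _ M). intros k HMk. unfold codes_segment.
  destruct (of_nat k) as [n c] eqn:Hk. intros (Hdom & Hstop & Hc & Hval).
  destruct (HN n (HM n c k Hk HMk Hc) Hdom) as [Hdome [Hle Hext]].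
  split; [assumption|split; [lia|split; [assumption|]]].
  intros i Hni Hi. rewrite Hext by assumption. apply Hval; lia.
Qed.

Section UpperBound.

Variables (I : Type) (lt : I -> I -> Prop) (eta : I -> Sseq).
Hypotheses (Hwo : well_order lt) (Hbt : below_t lt)
  (Hinc : forall a b, lt a b -> le_star (eta a) (eta b)).

Lemma le_star_upper_bound (a0 : I) (g : nat -> nat) :
  (forall n, n < g n) ->
  (forall a, infinite_set (fun n => sdom (eta a) n /\ stop (eta a) n <= g n)) ->
  exists e, in_S e /\ forall a, le_star (eta a) e.
Proof.
  intros Hg Hinf.
  destruct (pseudo_intersection_of_chain I lt Hwo Hbt (fun a => codes_segment (eta a) g))
    as [V [HVi HVs]].
  { intros a. apply codes_segment_infinite, Hinf. }
  { intros a b Hab. apply codes_segment_le_star, Hinc, Hab. }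
  set (ch n := epsilon (inhabits 0) (fun c => V (to_nat (n, c)))).
  exists (mkSseq (fun n => exists c, V (to_nat (n, c))) g (fun n => Nat.testbit (ch n))).
  split; [split|]; cbn [sdom stop sval].
  - (* [V] has only finitely many codes over each [n], being almost contained in
       the codes for [eta a0]. *)
    intros m. destruct (almost_sub_elim _ _ (HVs a0)) as [M0 HM0].
    destruct (of_nat_fst_large (fun n => 2 ^ g n) m) as [M HM].
    destruct (HVi (M0 + M)) as [k [Hk Vk]].
    pose proof (HM0 k ltac:(lia) Vk) as Wk. unfold codes_segment in Wk.
    destruct (of_nat k) as [n c] eqn:Ek. destruct Wk as (_ & _ & Hc & _).
    exists n. split; [apply (HM n c k); (assumption || lia)|].
    exists c. rewrite <- Ek, cancel_to_of. exact Vk.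
  - intros n _. apply Hg.
  - intros a. destruct (almost_sub_elim _ _ (HVs a)) as [M HM]. exists M.
    intros n Hn Hdom. assert (Vch : V (to_nat (n, ch n))) by apply epsilon_spec, Hdom.
    assert (Wch : codes_segment (eta a) g (to_nat (n, ch n))).
    { apply HM; [|exact Vch]. pose proof (to_nat_non_decreasing n (ch n)). lia. }
    unfold codes_segment in Wch. rewrite cancel_of_to in Wch.
    destruct Wch as (Hdome & Hstop & _ & Hval).
    split; [assumption|split; assumption].
Qed.

End UpperBound.

Theorem lemma2p7 (I : Type) (ltI : I -> I -> Prop) (eta : I -> Sseq) :
  well_order ltI ->
  below_t ltI ->
  (forall a, in_S (eta a)) ->
  (forall a b, ltI a b -> le_star (eta a) (eta b)) ->
  exists e : Sseq, in_S e /\ forall a, le_star (eta a) e.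
Proof.
  intros Hwo Hbt HS Hinc.
  destruct (classic (inhabited I)) as [[a0]|Hempty].
  2: { exists (mkSseq (fun _ => True) S (fun _ _ => true)).
       split; [split|].
       - intros m. exists m. split; [lia|constructor].
       - intros n _. simpl. lia.
       - intros a. destruct (Hempty (inhabits a)). }
  destruct (pseudo_intersection_of_chain I ltI Hwo Hbt (fun a => sdom (eta a)))
    as [B [HBi HBs]].
  { intros a. apply HS. }
  { intros a b Hab. apply le_star_almost_sub_sdom, Hinc, Hab. }
  destruct (sparse_chain_exists I ltI Hwo Hbt B (fun a => stop (eta a)) HBi)
    as (X & HXi & HXB & HXs & HXd).
  destruct (pseudo_intersection_of_chain I ltI Hwo Hbt X HXi HXd) as [Z [HZi HZs]].
  destruct (choice (fun n m => n < m /\ Z m)) as [g Hg].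
  { intros n. destruct (HZi (S n)) as [m [Hnm Zm]]. exists m. split; [lia|exact Zm]. }
  apply (le_star_upper_bound I ltI eta Hwo Hbt Hinc a0 g); [apply Hg|].
  intros a.
  assert (HZdom : almost_sub Z (sdom (eta a))).
  { apply (almost_sub_trans _ _ _ (HZs a)), (almost_sub_trans _ B); [|apply HBs].
    apply almost_sub_of_sub, HXB. }
  pose proof (sparse_almost_sub_bound _ _ _ _ (HXs a) (HZs a) Hg) as HZstop.
  apply (infinite_set_mono (fun n => Z n /\ sdom (eta a) n /\ stop (eta a) n < g n)).
  - intros n (_ & Hdom & Hstop). split; [assumption|lia].
  - apply almost_sub_infinite, almost_sub_and; assumption.
Qed.
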